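(* Let $f:\mathbb{N}\to\mathbb{R}$ with $f(1)=1$ be multiplicative (i.e. $f(mn)=f(m)f(n)$ for coprime $m,n$). Assume there exist $A>0$ and $c\in(0,1)$ such that $|f(n)|\leq Ac^n$ for all $n\geq2$. Then $|f^{-1}(n)| \leq n^{\frac{3\ln c}{\ln 3}+\frac{\ln(1+A)}{\ln 2}}$ for all $n\geq2$.
   Context: $f^{-1}$ denotes the Dirichlet inverse of $f$: the arithmetic function with $\sum_{d\mid n} f(n/d) f^{-1}(d)=\varepsilon(n)$ for all $n$, where $\varepsilon(1)=1$ and $\varepsilon(n)=0$ for $n\ge2$. *)

From HB Require Import structures.
From mathcomp Require Import all_boot all_order all_algebra.
From mathcomp Require Import reals exp.
Set Implicit Arguments. Unset Strict Implicit. Unset Printing Implicit Defensive.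
Import Order.TTheory GRing.Theory Num.Theory.
Local Open Scope ring_scope.

(* Arithmetic functions are modelled as f : nat -> R; the value at 0 is
   irrelevant (never used). *)

Definition multiplicative_fn (R : realType) (f : nat -> R) : Prop :=
  f 1%N = 1 /\
  forall m n : nat, (0 < m)%N -> (0 < n)%N -> coprime m n ->
    f (m * n)%N = f m * f n.

Definition dirichlet_inverse (R : realType) (f g : nat -> R) : Prop :=
  forall n : nat, (0 < n)%N ->
    \sum_(d <- divisors n) f (n %/ d)%N * g d = (n == 1%N)%:R.

From HB Require Import structures.
From mathcomp Require Import all_boot all_order all_algebra.
From mathcomp Require Import reals exp.
From mathcomp Require Import zify ring lra.
Import Order.TTheory GRing.Theory Num.Theory.

(* The Dirichlet inverse g of a multiplicative f is again multiplicative, so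
   it suffices to bound g on prime powers, where the inversion formula reads
   g(p^(k+1)) = - sum_(j <= k) f(p^(k+1-j)) g(p^j).  Writing alpha for the
   exponent of the statement, x^3 <= 3^x and 2^i <= p^i give
   (1+A)^i c^(p^i) <= (p^i)^alpha, i.e. |f(p^i)| <= A ((p^alpha)/(1+A))^i; as
   A * sum_(i >= 1) (1+A)^-i = 1, strong induction on k then yields
   |g(p^k)| <= (p^alpha)^k. *)

Lemma gcdn_mul_coprime_dvd {m n a b} : coprime m n -> a %| m -> b %| n ->
  gcdn (a * b) m = a.
Proof.
move=> cmn am bn; rewrite gcdnC Gauss_gcdl; first exact/gcdn_idPr.
exact: coprime_dvdr bn cmn.
Qed.

Lemma divisors_mul {m n} : 0 < m -> 0 < n -> coprime m n ->
  perm_eq (divisors (m * n)) [seq a * b | a <- divisors m, b <- divisors n].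
Proof.
move=> m_gt0 n_gt0 cmn; have mn_gt0 : 0 < m * n by rewrite muln_gt0 m_gt0.
apply: uniq_perm; rewrite ?divisors_uniq //.
  apply: allpairs_uniq; rewrite ?divisors_uniq //.
  move=> _ _ /allpairsP[[a1 b1] [/= + + ->]] /allpairsP[[a2 b2] [/= + + ->]] /=.
  rewrite -!dvdn_divisors // => a1m b1n a2m b2n e12.
  have cnm : coprime n m by rewrite coprime_sym.
  congr (_, _).
    rewrite -(gcdn_mul_coprime_dvd cmn a1m b1n).
    by rewrite e12 (gcdn_mul_coprime_dvd cmn a2m b2n).
  rewrite -(gcdn_mul_coprime_dvd cnm b1n a1m).
  rewrite -(gcdn_mul_coprime_dvd cnm b2n a2m).
  by rewrite mulnC e12 mulnC.
move=> d; rewrite -dvdn_divisors //; apply/idP/allpairsP => [d_mn|].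
  have d_gt0 : 0 < d := dvdn_gt0 mn_gt0 d_mn.
  have dm_gt0 : 0 < gcdn d m by rewrite gcdn_gt0 d_gt0.
  exists (gcdn d m, d %/ gcdn d m); rewrite /= mulnC divnK ?dvdn_gcdl //.
  rewrite -!dvdn_divisors ?dvdn_gcdr ?dvdn_divLR ?dvdn_gcdl //; split=> //.
  by rewrite muln_gcdr dvdn_gcd dvdn_mull // mulnC.
by move=> [[a b] [/= am bn ->]]; apply: dvdn_mul; rewrite dvdn_divisors.
Qed.

Lemma divisors_pfactor p k : prime p ->
  perm_eq (divisors (p ^ k)) [seq p ^ j | j <- iota 0 k.+1].
Proof.
move=> p_pr; have p_gt1 := prime_gt1 p_pr.
apply: uniq_perm; rewrite ?divisors_uniq ?map_inj_uniq ?iota_uniq //.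
  exact: expnI.
move=> d; rewrite -dvdn_divisors ?expn_gt0 ?prime_gt0 //.
apply/idP/mapP => [/(dvdn_pfactor _ _ p_pr)[j jk ->]|[j]].
  by exists j; rewrite // mem_iota ltnS jk.
by rewrite mem_iota ltnS => /andP[_ jk] ->; apply/dvdn_pfactor => //; exists j.
Qed.

Lemma expn3_le_exp3n x : x ^ 3 <= 3 ^ x.
Proof.
elim: x => // x IH; have [|x_ge3] := ltnP x 3; first by case: x IH => [|[|[|]]].
rewrite [3 ^ _]expnS; apply: leq_trans _ (leq_mul (leqnn 3) IH); nia.
Qed.

Local Open Scope ring_scope.

Lemma big_divisors_mul (V : nmodType) m n (F : nat -> V) :
  (0 < m)%N -> (0 < n)%N -> coprime m n ->
  \sum_(d <- divisors (m * n)) F d =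
    \sum_(a <- divisors m) \sum_(b <- divisors n) F (a * b)%N.
Proof.
move=> m_gt0 n_gt0 cmn.
by rewrite (perm_big _ (divisors_mul m_gt0 n_gt0 cmn)) big_allpairs_dep.
Qed.

Lemma big_divisors_pfactor (V : nmodType) p k (F : nat -> V) : prime p ->
  \sum_(d <- divisors (p ^ k)) F d = \sum_(j < k.+1) F (p ^ j)%N.
Proof.
move=> p_pr; rewrite (perm_big _ (divisors_pfactor p k p_pr)) big_map.
by rewrite -[iota 0 k.+1]/(index_iota 0 k.+1) big_mkord.
Qed.

Section DirichletInverse.

Context {R : realType} {f g : nat -> R}.
Hypotheses (f_mul : multiplicative_fn f) (fg_inv : dirichlet_inverse f g).

Let f1 : f 1%N = 1 := f_mul.1.

Lemma multiplicative_divn_mul m n a b :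
  (0 < m)%N -> (0 < n)%N -> coprime m n -> (a %| m)%N -> (b %| n)%N ->
  f (m * n %/ (a * b))%N = f (m %/ a)%N * f (n %/ b)%N.
Proof.
move=> m_gt0 n_gt0 cmn am bn.
have [a_gt0 b_gt0] := (dvdn_gt0 m_gt0 am, dvdn_gt0 n_gt0 bn).
rewrite -{1}(divnK am) -{1}(divnK bn) mulnACA mulnK ?muln_gt0 ?a_gt0 //.
apply: f_mul.2; rewrite ?divn_gt0 ?(dvdn_leq m_gt0) ?(dvdn_leq n_gt0) //.
exact: coprime_dvdl (dvdn_div am) (coprime_dvdr (dvdn_div bn) cmn).
Qed.

Lemma dirichlet_inverse1 : g 1%N = 1.
Proof. by have := @fg_inv 1%N isT; rewrite big_seq1 divnn f1 mul1r. Qed.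

Lemma dirichlet_inverse_pfactor p k : prime p ->
  g (p ^ k.+1)%N = - \sum_(j < k.+1) f (p ^ (k.+1 - j))%N * g (p ^ j)%N.
Proof.
move=> p_pr; have p_gt0 := prime_gt0 p_pr.
have := @fg_inv (p ^ k.+1)%N; rewrite expn_gt0 p_gt0 => /(_ isT).
rewrite -[X in (_ ^ _ == X)%N](expn0 p) eqn_exp2l ?prime_gt1 //.
rewrite big_divisors_pfactor // big_ord_recr /= divnn expn_gt0 p_gt0 f1 mul1r.
under eq_bigr => j _ do rewrite -expnB ?(ltnW (ltn_ord j)) //.
by move/eqP; rewrite addrC addr_eq0 => /eqP.
Qed.

Lemma dirichlet_sum_coprime_mul m n : (0 < m)%N -> (0 < n)%N -> coprime m n ->
  \sum_(d <- divisors (m * n)) f (m * n %/ d)%N * g d =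
    \sum_(a <- divisors m) \sum_(b <- divisors n)
      f (m %/ a)%N * f (n %/ b)%N * (g (a * b)%N - g a * g b) +
    (\sum_(a <- divisors m) f (m %/ a)%N * g a) *
    (\sum_(b <- divisors n) f (n %/ b)%N * g b).
Proof.
move=> m_gt0 n_gt0 cmn; rewrite big_divisors_mul // big_distrlr -big_split.
apply: eq_big_seq => a; rewrite -dvdn_divisors // => am.
rewrite -big_split; apply: eq_big_seq => b; rewrite -dvdn_divisors // => bn.
by rewrite /= multiplicative_divn_mul //; ring.
Qed.

Lemma dirichlet_inverseM m n : (0 < m)%N -> (0 < n)%N -> coprime m n ->
  g (m * n)%N = g m * g n.
Proof.
have [N] := ubnP (m * n); elim: N m n => // N IH m n mnN m_gt0 n_gt0 cmn.
have [->|m_neq1] := eqVneq m 1%N.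
  by rewrite mul1n dirichlet_inverse1 mul1r.
have [->|n_neq1] := eqVneq n 1%N.
  by rewrite muln1 dirichlet_inverse1 mulr1.
have off_diag a b : (a %| m)%N -> (b %| n)%N -> (a != m) || (b != n) ->
    f (m %/ a)%N * f (n %/ b)%N * (g (a * b)%N - g a * g b) = 0.
  move=> am bn ab_neq; suff -> : g (a * b)%N = g a * g b by rewrite subrr mulr0.
  have [a_gt0 b_gt0] := (dvdn_gt0 m_gt0 am, dvdn_gt0 n_gt0 bn).
  apply: IH => //; last exact: coprime_dvdl am (coprime_dvdr bn cmn).
  have [a_le b_le] := (dvdn_leq m_gt0 am, dvdn_leq n_gt0 bn).
  nia.
have := @fg_inv (m * n)%N; rewrite muln_gt0 m_gt0 n_gt0 => /(_ isT).
rewrite dirichlet_sum_coprime_mul // !fg_inv // muln_eq1 !(negbTE m_neq1) /=.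
rewrite mul0r addr0 (bigD1_seq m) ?divisors_id ?divisors_uniq //=.
rewrite (bigD1_seq n) ?divisors_id ?divisors_uniq //=.
rewrite [\sum_(b <- _ | b != n) _]big1_seq ?addr0; last first.
  move=> b /andP[b_neq]; rewrite -dvdn_divisors // => bn.
  by rewrite off_diag ?b_neq ?orbT.
rewrite [\sum_(a <- _ | a != m) _]big1_seq ?addr0; last first.
  move=> a /andP[a_neq]; rewrite -dvdn_divisors // => am.
  apply: big1_seq => b; rewrite -dvdn_divisors // => bn.
  by rewrite off_diag ?a_neq.
by rewrite !divnn m_gt0 n_gt0 f1 !mul1r => /eqP; rewrite subr_eq0 => /eqP.
Qed.

End DirichletInverse.

Section GeometricRecurrence.
Variable R : realFieldType.

Lemma geometric_tail_le1 (A : R) k : 0 < A ->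
  A * \sum_(j < k) (1 + A)^-1 ^+ (k - j) <= 1.
Proof.
move=> A_gt0; have A1_gt0 : 0 < 1 + A by lra.
elim: k => [|k IH]; first by rewrite big_ord0 mulr0 ler01.
rewrite big_ord_recr /= subSnn expr1.
under eq_bigr => j _ do rewrite subSn 1?exprS ?(ltnW (ltn_ord j)) //.
rewrite -big_distrr /=; set S := \sum_(j < k) _ in IH *.
have -> : A * ((1 + A)^-1 * S + (1 + A)^-1) = (1 + A)^-1 * (A * S + A) by ring.
rewrite -[X in _ <= X](mulVf (lt0r_neq0 A1_gt0)).
by rewrite ler_pM2l ?invr_gt0 // lerD2r.
Qed.

Lemma recurrence_le_exprn (u w : nat -> R) (A H : R) : 0 < A -> 0 <= H ->
  `|u 0%N| <= 1 -> (forall i, (0 < i)%N -> `|w i| <= A * (H / (1 + A)) ^+ i) ->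
  (forall k, u k.+1 = - \sum_(j < k.+1) w (k.+1 - j)%N * u j) ->
  forall k, `|u k| <= H ^+ k.
Proof.
move=> A_gt0 H_ge0 u0_le w_le u_rec.
elim/ltn_ind => -[|k] IH; first by rewrite expr0.
have term_le (j : 'I_k.+1) : `|w (k.+1 - j)%N * u j| <=
    A * (1 + A)^-1 ^+ (k.+1 - j) * H ^+ k.+1.
  have j_le : (j <= k.+1)%N := ltnW (ltn_ord j).
  rewrite normrM -[in H ^+ _](subnK j_le) exprD mulrA.
  apply: ler_pM; rewrite ?normr_ge0 ?IH //.
  apply: le_trans (w_le _ _) _; first by rewrite subn_gt0.
  by rewrite expr_div_n exprVn mulrA mulrAC.
rewrite u_rec normrN; apply: le_trans (ler_norm_sum _ _ _) _.
apply: le_trans (ler_sum _ (fun j _ => term_le j)) _.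
by rewrite -big_distrl -big_distrr /= ler_piMl ?exprn_ge0 ?geometric_tail_le1.
Qed.

End GeometricRecurrence.

Section PowRBounds.
Variable R : realType.

Lemma exprn_le_powR (a x e : R) i : 0 < a -> 0 < x ->
  i%:R * ln a <= e * ln x -> a ^+ i <= x `^ e.
Proof.
move=> a_gt0 x_gt0 ln_le.
by rewrite -ler_ln ?posrE ?exprn_gt0 ?powR_gt0 // lnXn // ln_powR -mulr_natl.
Qed.

Lemma ler_ln_natX {m n k l : nat} : (0 < m)%N -> (0 < n)%N ->
  (m ^ k <= n ^ l)%N -> k%:R * ln (m%:R : R) <= l%:R * ln (n%:R : R).
Proof.
move=> m_gt0 n_gt0; rewrite -(ler_nat R) !mulr_natl -!lnXn ?ltr0n // -!natrX.
by rewrite ler_ln ?posrE ?ltr0n ?expn_gt0 ?m_gt0 ?n_gt0.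
Qed.

Lemma exprn_le_powR_ln_exp (c : R) b k x : 0 < c <= 1 -> (1 < b)%N ->
  (0 < x)%N -> (x ^ k <= b ^ x)%N -> c ^+ x <= x%:R `^ (k%:R * ln c / ln b%:R).
Proof.
move=> /andP[c_gt0 c_le1] b_gt1 x_gt0 xk_le.
have ln_b_gt0 : 0 < ln (b%:R : R) by rewrite ln_gt0 // ltr1n.
have ln_c_le0 : ln c <= 0 := ln_le0 c_le1.
have ln_le := ler_ln_natX x_gt0 (ltnW b_gt1) xk_le.
apply: exprn_le_powR; rewrite ?ltr0n //.
by rewrite mulrAC ler_pdivlMr //; nra.
Qed.

Lemma exprn_le_powR_ln_base (a : R) b i x : 1 <= a -> (1 < b)%N ->
  (b ^ i <= x)%N -> a ^+ i <= x%:R `^ (ln a / ln b%:R).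
Proof.
move=> a_ge1 b_gt1 bi_le.
have x_gt0 : (0 < x)%N by apply: leq_trans bi_le; rewrite expn_gt0 ltnW.
have ln_b_gt0 : 0 < ln (b%:R : R) by rewrite ln_gt0 // ltr1n.
have ln_a_ge0 : 0 <= ln a := ln_ge0 a_ge1.
have := ler_ln_natX (ltnW b_gt1) x_gt0 (_ : b ^ i <= x ^ 1)%N.
rewrite expn1 mul1r => /(_ bi_le) ln_le.
apply: exprn_le_powR; rewrite ?ltr0n ?(lt_le_trans ltr01) //.
by rewrite mulrAC ler_pdivlMr //; nra.
Qed.

Lemma powR_exprn (x e : R) n : 0 <= x -> (x ^+ n) `^ e = (x `^ e) ^+ n.
Proof. by move=> x_ge0; rewrite -!powR_mulrn ?powR_ge0 // powRAC. Qed.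

Lemma multiplicative_le_powR (g : nat -> R) e :
  (forall m n, (0 < m)%N -> (0 < n)%N -> coprime m n ->
    g (m * n)%N = g m * g n) ->
  (forall p k, prime p -> `|g (p ^ k)%N| <= (p ^ k)%:R `^ e) ->
  forall n, (0 < n)%N -> `|g n| <= n%:R `^ e.
Proof.
move=> gM g_pfactor_le; elim/ltn_ind => n IH n_gt0.
have [n_le1|n_gt1] := leqP n 1.
  have -> : n = 1%N by apply/eqP; rewrite eqn_leq n_le1.
  exact: (g_pfactor_le 2 0).
have p_pr : prime (pdiv n) := pdiv_prime n_gt1.
have [m cop_pm n_eq] := pfactor_coprime p_pr n_gt0.
set q := (pdiv n ^ logn (pdiv n) n)%N in n_eq.
have q_gt1 : (1 < q)%N.
  rewrite -[1%N](expn0 (pdiv n)) ltn_exp2l ?prime_gt1 //.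
  by rewrite logn_gt0 mem_primes p_pr n_gt0 pdiv_dvd.
have m_gt0 : (0 < m)%N by move: n_gt0; rewrite n_eq muln_gt0 => /andP[].
have m_lt_n : (m < n)%N by rewrite n_eq ltn_Pmulr.
have cop_mq : coprime m q by rewrite coprime_sym coprimeXl.
rewrite n_eq gM ?(ltnW q_gt1) // normrM natrM powRM ?ler0n //.
by apply: ler_pM; rewrite ?normr_ge0 ?g_pfactor_le ?IH.
Qed.

End PowRBounds.

Section Corollary.
Context {R : realType} {f : nat -> R} {A c : R}.
Hypotheses (A_gt0 : 0 < A) (c_gt0 : 0 < c) (c_lt1 : c < 1)
  (f_le : forall n, (2 <= n)%N -> `|f n| <= A * c ^+ n).

Local Notation alpha := (3 * ln c / ln 3 + ln (1 + A) / ln 2).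

Lemma exp_decay_le_powR x i : (2 ^ i <= x)%N ->
  (1 + A) ^+ i * c ^+ x <= x%:R `^ alpha.
Proof.
move=> le_x; have x_gt0 : (0 < x)%N by apply: leq_trans le_x; rewrite expn_gt0.
rewrite (addrC (3 * ln c / ln 3)) powRD; last first.
  by rewrite pnatr_eq0 -lt0n x_gt0 implybT.
have A1_ge1 : 1 <= 1 + A by rewrite lerDl ltW.
apply: ler_pM; rewrite ?exprn_ge0 ?(le_trans ler01 A1_ge1) ?(ltW c_gt0) //.
  exact: exprn_le_powR_ln_base.
by apply: exprn_le_powR_ln_exp (expn3_le_exp3n x); rewrite ?c_gt0 ?(ltW c_lt1).
Qed.

Lemma pfactor_decay_le p i : (1 < p)%N -> (0 < i)%N ->
  `|f (p ^ i)%N| <= A * (p%:R `^ alpha / (1 + A)) ^+ i.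
Proof.
move=> p_gt1 i_gt0.
have pi_ge2 : (2 <= p ^ i)%N.
  exact: leq_trans p_gt1 (leq_pexp2l (ltnW p_gt1) i_gt0).
apply: le_trans (f_le _ pi_ge2) _; rewrite ler_pM2l //.
rewrite expr_div_n -powR_exprn ?ler0n // -natrX.
rewrite ler_pdivlMr ?exprn_gt0 ?addr_gt0 //.
by rewrite mulrC exp_decay_le_powR // leq_exp2r.
Qed.

Lemma dirichlet_inverse_pfactor_le g :
  multiplicative_fn f -> dirichlet_inverse f g ->
  forall p k, prime p -> `|g (p ^ k)%N| <= (p ^ k)%:R `^ alpha.
Proof.
move=> f_mul fg_inv p k p_pr; rewrite natrX powR_exprn ?ler0n //.
apply: (@recurrence_le_exprn _ (fun k => g (p ^ k)%N) (fun i => f (p ^ i)%N) A).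
- exact: A_gt0.
- exact: powR_ge0.
- by rewrite expn0 (dirichlet_inverse1 f_mul fg_inv) normr1.
- by move=> i; apply: pfactor_decay_le (prime_gt1 p_pr).
- by move=> j; apply: dirichlet_inverse_pfactor.
Qed.

End Corollary.

Theorem corollary3p7 (R : realType) (f finv : nat -> R) (A c : R) :
  multiplicative_fn f ->
  0 < A -> 0 < c -> c < 1 ->
  (forall n : nat, (2 <= n)%N -> `|f n| <= A * c ^+ n) ->
  dirichlet_inverse f finv ->
  forall n : nat, (2 <= n)%N ->
    `|finv n| <= (n%:R) `^ (3 * ln c / ln 3 + ln (1 + A) / ln 2).
Proof.
move=> f_mul A_gt0 c_gt0 c_lt1 f_le finv_inv n n_ge2.
apply: multiplicative_le_powR (ltnW n_ge2).
  exact: dirichlet_inverseM f_mul finv_inv.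
exact: dirichlet_inverse_pfactor_le A_gt0 c_gt0 c_lt1 f_le _ f_mul finv_inv.
Qed.
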